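(* Let $f(x)\in\mathbb{Z}[x]$ be a $0,1$-polynomial with $f(0)=1$ such that $f(x)$ is divisible by the product of two non-reciprocal irreducible polynomials in $\mathbb{Z}[x]$ (not necessarily distinct). Then there is a $0,1$-polynomial $g(x)$ with the same number of (nonzero) terms as $f(x)$, with $g(x)\notin\{f(x),\tilde f(x)\}$, satisfying $$f(x)\tilde f(x) = g(x)\tilde g(x).$$
   Context: A $0,1$-polynomial is a polynomial each of whose coefficients is $0$ or $1$. For nonzero $f(x)\in\mathbb{R}[x]$, $\tilde f(x)=x^{\deg f}f(1/x)$; $f$ is reciprocal if $f=\pm\tilde f$, and non-reciprocal otherwise. *)

From mathcomp Require Import all_boot all_order all_algebra.
Set Implicit Arguments. Unset Strict Implicit. Unset Printing Implicit Defensive.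
Import GRing.Theory Num.Theory.
Local Open Scope ring_scope.

Definition zero_one (p : {poly int}) : bool :=
  all (fun c => (c == 0) || (c == 1)) p.

(* tilde p = x^(deg p) p(1/x): reverse the coefficient list (size p = deg p + 1). *)
Definition tilde (p : {poly int}) : {poly int} :=
  \poly_(i < size p) p`_(size p - 1 - i)%N.

Definition reciprocal (p : {poly int}) : Prop := p = tilde p \/ p = - tilde p.

Definition irreducible_Zx (p : {poly int}) : Prop :=
  p != 0 /\ ~~ (p \is a GRing.unit) /\
  forall a b : {poly int}, p = a * b -> a \is a GRing.unit \/ b \is a GRing.unit.

Definition nterms (p : {poly int}) : nat := count (fun c => c != 0) p.

From HB Require Import structures.
From mathcomp Require Import all_boot all_order all_algebra.
From mathcomp Require Import zify ring.

Set Implicit Arguments.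
Unset Strict Implicit.
Unset Printing Implicit Defensive.

Import GRing.Theory Num.Theory.
Local Open Scope ring_scope.

(* Write f = p q h.  Reversal is multiplicative, so each of the products
   g = p~ q h, p q~ h, p~ q~ h satisfies g g~ = f f~ and has the size and the
   value at 1 of f.  The middle coefficient of g g~ is sum g_i^2, hence
   sum g_i^2 = sum f_i^2 = sum f_i = sum g_i, i.e. sum g_i (g_i - 1) = 0 with
   nonnegative summands: g is a 0,1-polynomial with as many terms as f.  In an
   integral domain, p <> p~ and q <> +-q~ force one of the three products to
   differ from both p q h and p~ q~ h~. *)

Section Reversal.
Variable R : comNzRingType.
Implicit Types (p q : {poly R}) (c : R).

Definition revp (N : nat) p : {poly R} := \poly_(i < N) p`_(N - 1 - i).

Lemma revpD N p q : revp N (p + q) = revp N p + revp N q.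
Proof. by apply/polyP => i; rewrite !(coefD, coef_poly); case: ifP; rewrite ?addr0. Qed.

Lemma revpZ N c p : revp N (c *: p) = c *: revp N p.
Proof. by apply/polyP => i; rewrite !(coefZ, coef_poly); case: ifP; rewrite ?mulr0. Qed.

HB.instance Definition _ N := GRing.isSemilinear.Build R {poly R} {poly R} _
  (revp N) (revpZ N, revpD N).

Lemma revpXn N k : (k < N)%N -> revp N 'X^k = 'X^(N - 1 - k).
Proof.
move=> ltkN; apply/polyP => i; rewrite coef_poly !coefXn.
case: ltnP => Ni.
  by have -> : (N - 1 - i == k)%N = (i == N - 1 - k)%N by apply/eqP/eqP; lia.
by have -> : (i == N - 1 - k)%N = false by apply/eqP; lia.
Qed.

Lemma revp_expand N p :
  (size p <= N)%N -> revp N p = \sum_(i < N) p`_i *: 'X^(N - 1 - i).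
Proof.
move=> spN; rewrite -{1}(take_poly_id spN) /take_poly poly_def linear_sum.
by apply: eq_bigr => i _; rewrite linearZ /= revpXn.
Qed.

Lemma revpM A B p q : (size p <= A)%N -> (size q <= B)%N ->
  revp (A + B).-1 (p * q) = revp A p * revp B q.
Proof.
move=> spA sqB; rewrite (revp_expand spA) (revp_expand sqB).
rewrite -{1}(take_poly_id spA) -{1}(take_poly_id sqB) /take_poly !poly_def.
rewrite !big_distrl linear_sum; apply: eq_bigr => i _ /=.
rewrite !big_distrr linear_sum; apply: eq_bigr => j _ /=.
have [lt_i_A lt_j_B] := (ltn_ord i, ltn_ord j).
rewrite -!scalerAl -!scalerAr !scalerA -!exprD linearZ /= revpXn; last by lia.
by congr (_ *: 'X^_); lia.
Qed.

End Reversal.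

Lemma horner1E (R : nzSemiRingType) (p : {poly R}) : p.[1] = \sum_(c <- p) c.
Proof.
by rewrite horner_coef (big_nth 0) big_mkord; apply: eq_bigr => i _; rewrite expr1n mulr1.
Qed.

Implicit Types p q : {poly int}.

Lemma coef_tilde p i :
  (tilde p)`_i = if (i < size p)%N then p`_(size p - 1 - i) else 0.
Proof. exact: coef_poly. Qed.

Lemma coef0_tilde p : (tilde p)`_0 = lead_coef p.
Proof.
rewrite coef_tilde subn0 subn1 /lead_coef; case: ltnP => // sp0.
by rewrite nth_default // (leq_trans sp0).
Qed.

Lemma size_tilde p : p`_0 != 0 -> size (tilde p) = size p.
Proof.
move=> p0; rewrite /tilde size_poly_eq //.
have [-> | sp_gt0] := posnP (size p); first by rewrite subnn.
by have -> : (size p - 1 - (size p).-1 = 0)%N by lia.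
Qed.

Lemma tildeK p : p`_0 != 0 -> tilde (tilde p) = p.
Proof.
move=> p0; apply/polyP => i; rewrite coef_tilde size_tilde //.
case: ltnP => [lt_i_p | le_p_i]; last by rewrite nth_default.
by rewrite coef_tilde ifT; [congr nth | ]; lia.
Qed.

Lemma tildeM p q : p != 0 -> q != 0 -> tilde (p * q) = tilde p * tilde q.
Proof. by move=> p0 q0; rewrite /tilde -!/(revp _ _) size_mul // revpM. Qed.

Lemma horner1_tilde p : (tilde p).[1] = p.[1].
Proof.
rewrite /tilde -/(revp _ _) revp_expand // horner_sum horner_coef.
by apply: eq_bigr => i _; rewrite hornerZ hornerXn !expr1n.
Qed.

Lemma coef_mul_tilde_mid p : (p * tilde p)`_(size p).-1 = \sum_(c <- p) c ^+ 2.
Proof.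
have [-> | p0] := eqVneq p 0; first by rewrite mul0r coef0 polyseq0 big_nil.
have sp_gt0 : (0 < size p)%N by rewrite size_poly_gt0.
rewrite (big_nth 0) big_mkord coefM prednK // -subn1.
apply: eq_bigr => i _; have lt_i_p := ltn_ord i.
by rewrite coef_tilde ifT ?expr2 ?subKn //; lia.
Qed.

Lemma nterms_zero_one p : zero_one p -> (nterms p)%:Z = p.[1].
Proof.
rewrite horner1E /nterms /zero_one; elim: (polyseq p) => [|c s IHs] /=.
  by rewrite big_nil.
move=> /andP[c01 s01]; rewrite big_cons PoszD IHs //.
by case/orP: c01 => /eqP->.
Qed.

Lemma zero_one_sum_sqr (s : seq int) :
  \sum_(c <- s) c ^+ 2 = \sum_(c <- s) c -> all (fun c => (c == 0) || (c == 1)) s.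
Proof.
move=> sum_sqr; have /eqP : \sum_(c <- s) (c ^+ 2 - c) = 0 by rewrite sumrB sum_sqr subrr.
rewrite psumr_eq0 => [|c _]; last by rewrite subr_ge0 expr2; nia.
apply: sub_all => c /=.
by rewrite expr2 -{3}[c]mulr1 -mulrBr mulf_eq0 subr_eq0.
Qed.

(* Constant terms are kept nonzero because [tilde] is an involution only on
   such polynomials; this makes [same_norm] stable under products and [tilde]. *)
Definition same_norm p q : Prop :=
  [/\ p`_0 != 0, q`_0 != 0, size p = size q, p.[1] = q.[1] &
      p * tilde p = q * tilde q].

Lemma poly_neq0_coef0 p : p`_0 != 0 -> p != 0.
Proof. by apply: contraNneq => ->; rewrite coef0. Qed.

Lemma same_norm_refl p : p`_0 != 0 -> same_norm p p.
Proof. by move=> p0; split. Qed.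

Lemma same_norm_tilde p : p`_0 != 0 -> same_norm (tilde p) p.
Proof.
move=> p0; split=> //; last 2 first.
- exact: horner1_tilde.
- by rewrite tildeK // mulrC.
- by rewrite coef0_tilde lead_coef_eq0 poly_neq0_coef0.
- exact: size_tilde.
Qed.

Lemma same_normM p1 q1 p2 q2 :
  same_norm p1 q1 -> same_norm p2 q2 -> same_norm (p1 * p2) (q1 * q2).
Proof.
move=> [p10 q10 s1 v1 n1] [p20 q20 s2 v2 n2].
have nz := poly_neq0_coef0.
split; rewrite ?coef0M ?mulf_neq0 ?size_mul ?hornerM ?s1 ?s2 ?v1 ?v2 ?nz //.
by rewrite !tildeM ?nz // mulrACA n1 n2 mulrACA.
Qed.

Lemma zero_one_same_norm f g :
  zero_one f -> same_norm g f -> zero_one g /\ nterms g = nterms f.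
Proof.
move=> f01 [g0 f0 sgf vgf ngf].
have sum_sqr : \sum_(c <- g) c ^+ 2 = \sum_(c <- f) c ^+ 2.
  by rewrite -!coef_mul_tilde_mid ngf sgf.
have f_sqr : \sum_(c <- f) c ^+ 2 = \sum_(c <- f) c.
  by apply: eq_big_seq => c /(allP f01) /orP[] /eqP->; rewrite ?expr0n ?expr1n.
have g01 : zero_one g by apply: zero_one_sum_sqr; rewrite sum_sqr f_sqr -!horner1E vgf.
by split=> //; apply/eqP; rewrite -eqz_nat !nterms_zero_one ?vgf.
Qed.

Lemma swapped_product_new (R : idomainType) (p q h p' q' h' : R) :
  p != 0 -> q != 0 -> h != 0 -> p' != 0 -> q' != 0 ->
  p != p' -> q != q' -> q != - q' ->
  exists2 g, g \in [:: p' * q * h; p * q' * h; p' * q' * h] &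
    (g != p * q * h) && (g != p' * q' * h').
Proof.
move=> p0 q0 h0 p'0 q'0 pp' qq' qNq'.
have [e1 | ne1] := eqVneq (p' * q * h) (p' * q' * h'); last first.
  exists (p' * q * h); rewrite ?inE ?eqxx // ne1 andbT.
  by rewrite -!mulrA (inj_eq (mulIf (mulf_neq0 q0 h0))) eq_sym.
have [e2 | ne2] := eqVneq (p * q' * h) (p' * q' * h'); last first.
  exists (p * q' * h); rewrite ?inE ?eqxx ?orbT // ne2 andbT.
  by rewrite (inj_eq (mulIf h0)) (inj_eq (mulfI p0)) eq_sym.
have qh : q * h = q' * h' by apply: (mulfI p'0); rewrite !mulrA.
have ph : p * h = p' * h'.
  by apply: (mulfI q'0); rewrite !mulrA [q' * p]mulrC [q' * p']mulrC.
exists (p' * q' * h); rewrite ?inE ?eqxx ?orbT //; apply/andP; split.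
  apply: contra_neq qNq' => /(mulIf h0) pq.
  have : p * q * ((h - h') * (h + h')) = 0.
    transitivity ((p * h) * (q * h) - (p' * q') * (h' * h')); first by rewrite pq; ring.
    by rewrite ph qh; ring.
  move/eqP; rewrite !mulf_eq0 (negbTE p0) (negbTE q0) subr_eq0 addr_eq0 /=.
  case/orP => [/eqP hh' | /eqP hNh'].
    by rewrite -(inj_eq (mulIf h0)) qh hh' eqxx in qq'.
  by apply: (mulIf h0); rewrite mulNr qh hNh' mulrN opprK.
apply: contra_neq qq' => /(mulfI (mulf_neq0 p'0 q'0)) hh'.
by apply: (mulIf h0); rewrite qh hh'.
Qed.

Theorem lemma2 (f : {poly int}) :
  zero_one f -> f.[0] = 1 ->
  (exists p q h : {poly int},
      irreducible_Zx p /\ irreducible_Zx q /\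
      ~ reciprocal p /\ ~ reciprocal q /\ f = p * q * h) ->
  exists g : {poly int},
    zero_one g /\ nterms g = nterms f /\ g <> f /\ g <> tilde f /\
    f * tilde f = g * tilde g.
Proof.
move=> f01 f0 [p [q [h [_ [_ [p_nrec [q_nrec def_f]]]]]]]; subst f.
have : p`_0 * q`_0 * h`_0 != 0 by rewrite -!horner_coef0 -!hornerM f0 oner_neq0.
rewrite !mulf_eq0 !negb_or => /andP[/andP[p0 q0] h0].
have [[tp0 _ _ _ _] [tq0 _ _ _ _]] := (same_norm_tilde p0, same_norm_tilde q0).
have p_tp : p != tilde p by apply/eqP => ?; apply: p_nrec; left.
have [q_tq qN_tq] : q != tilde q /\ q != - tilde q.
  by split; apply/eqP => ?; apply: q_nrec; [left | right].
have nz := poly_neq0_coef0.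
have [g g_swap /andP[/eqP g_f /eqP g_tf]] := swapped_product_new (tilde h)
  (nz _ p0) (nz _ q0) (nz _ h0) (nz _ tp0) (nz _ tq0) p_tp q_tq qN_tq.
have norm_g : same_norm g (p * q * h).
  move: g_swap; rewrite !inE => /or3P[] /eqP->;
  by do 2?apply: same_normM; by [apply: same_norm_tilde | apply: same_norm_refl].
have [g01 nterms_g] := zero_one_same_norm f01 norm_g.
case: norm_g => _ _ _ _ norm_eq.
by exists g; do 4?split => //; rewrite !tildeM ?mulf_neq0 ?nz.
Qed.
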